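(* Suppose $x^\dagger\neq0$ satisfies the source condition $x^\dagger=(A^*A)^\mu\omega$ with $\|\omega\|\le C_s$ and $0<\mu\le1$. Then there is a constant $C$ (depending on $\mu$, $C_s$, $\alpha_{\max}$ and $\|A\|$) such that for all $\alpha\in(0,\alpha_{\max})$ $$\|x_\alpha-x^\dagger\|\le\frac{C}{\|A^*Ax^\dagger\|^{2\mu}}\,\psi_{SL}(\alpha,x^\dagger)^{2\mu}.$$
   Context: Let $X,Y$ be real Hilbert spaces and $A:X\to Y$ a compact linear operator with singular system $(\sigma_i,u_i,v_i)_i$, $\sigma_i>0$; put $\lambda_i=\sigma_i^2$. Let $x^\dagger\in N(A)^\perp$ (minimum-norm solution), $y=Ax^\dagger$, $x_\alpha=(A^*A+\alpha I)^{-1}A^*y$, $\alpha_{\max}>0$ fixed, and $\psi_{SL}(\alpha,x^\dagger):=\Big(\sum_i\frac{\alpha\lambda_i^2}{(\lambda_i+\alpha)^3}|\langle x^\dagger,u_i\rangle|^2\Big)^{1/2}$. *)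

From Stdlib Require Import Reals Lra.
Open Scope R_scope.

(* The compact operator A : X -> Y with
   singular system (sigma_i, u_i, v_i)_i is represented by the sequence
   sigma : nat -> R of its singular values; an element x of N(A)^perp is
   represented by its coefficient sequence c i = <x, u_i>.  lambda_i = sigma_i^2. *)

Definition lam (sigma : nat -> R) (i : nat) : R := (sigma i)^2.

(* coefficients of x_alpha = (A^*A + alpha I)^{-1} A^* A x  in the basis u_i *)
Definition tik_coef (sigma : nat -> R) (c : nat -> R) (alpha : R) (i : nat) : R :=
  lam sigma i / (lam sigma i + alpha) * c i.

Definition err_term (sigma c : nat -> R) (alpha : R) (i : nat) : R :=
  (tik_coef sigma c alpha i - c i)^2.

(* terms of psi_SL(alpha, x)^2 *)
Definition psiSL_term (sigma c : nat -> R) (alpha : R) (i : nat) : R :=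
  alpha * (lam sigma i)^2 / (lam sigma i + alpha)^3 * (c i)^2.

Definition AsA_term (sigma c : nat -> R) (i : nat) : R :=
  (lam sigma i * c i)^2.

Definition norm_term (c : nat -> R) (i : nat) : R := (c i)^2.

(* ||A|| is the supremum of the singular values *)
Definition opnorm_is (sigma : nat -> R) (nA : R) : Prop :=
  is_lub (fun r => exists i, r = sigma i) nA.

(* In the singular basis, x_alpha - x^dagger has coefficients
   -(alpha / (lambda_i + alpha)) lambda_i^mu omega_i, and
   alpha lambda^mu <= alpha^mu (lambda + alpha) for 0 < mu <= 1 because
   alpha^(1-mu) lambda^mu <= max alpha lambda; hence
   ||x_alpha - x^dagger|| <= C_s alpha^mu.  Conversely, lambda_i + alpha <= L
   with L := ||A||^2 + alpha_max, so every term lambda_i^2 c_i^2 of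
   ||A^*A x^dagger||^2 is at most L^3 / alpha times the corresponding term of
   psi_SL^2; thus alpha <= L^3 psi_SL^2 / ||A^*A x^dagger||^2, and raising this
   to the power mu gives the claim with C = C_s L^(3 mu). *)

From Stdlib Require Import Reals Lra.
Open Scope R_scope.

Lemma infinite_sum_le (f g : nat -> R) (lf lg : R) :
  (forall i, f i <= g i) -> infinite_sum f lf -> infinite_sum g lg -> lf <= lg.
Proof.
  intros Hfg Hf Hg.
  exact (Rle_cv_lim (fun n => sum_growing f g n Hfg) Hf Hg).
Qed.

Lemma infinite_sum_scal (g : nat -> R) (k l : R) :
  infinite_sum g l -> infinite_sum (fun i => k * g i) (k * l).
Proof.
  intros Hg.
  assert (Hk : Un_cv (fun _ => k) k).
  { intros eps Heps; exists 0%nat; intros n _.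
    unfold R_dist; rewrite Rminus_diag, Rabs_R0; lra. }
  apply (Un_cv_ext (fun n => k * sum_f_R0 g n)).
  - intros n; rewrite scal_sum; apply sum_eq; intros i _; ring.
  - exact (CV_mult _ _ _ _ Hk Hg).
Qed.

Lemma term_le_infinite_sum (f : nat -> R) (l : R) :
  (forall i, 0 <= f i) -> infinite_sum f l -> forall i, f i <= l.
Proof.
  intros Hf0 Hf i.
  assert (Hgrow : Un_growing (sum_f_R0 f)).
  { intros n; simpl; specialize (Hf0 (S n)); lra. }
  pose proof (growing_ineq _ _ Hgrow Hf i) as Hi.
  destruct i as [|i]; simpl in Hi; [lra|].
  pose proof (cond_pos_sum f i Hf0); lra.
Qed.

Lemma Rpower_geom_le_add (a b t : R) :
  0 < a -> 0 < b -> 0 <= t <= 1 -> Rpower a (1 - t) * Rpower b t <= a + b.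
Proof.
  intros Ha Hb Ht.
  set (m := Rmax a b).
  assert (Hm : 0 < m) by (apply (Rlt_le_trans _ a); [lra | apply Rmax_l]).
  apply (Rle_trans _ (Rpower m (1 - t) * Rpower m t)).
  - apply Rmult_le_compat; try (left; apply exp_pos);
      apply Rle_Rpower_l; try lra; split; auto; [apply Rmax_l | apply Rmax_r].
  - rewrite <- Rpower_plus; replace (1 - t + t) with 1 by ring.
    rewrite Rpower_1 by exact Hm.
    unfold m; apply Rmax_case_strong; lra.
Qed.

Lemma tikhonov_qualification (alpha l mu : R) :
  0 < alpha -> 0 < l -> 0 <= mu <= 1 ->
  alpha * Rpower l mu <= Rpower alpha mu * (l + alpha).
Proof.
  intros Ha Hl Hmu.
  assert (Hsplit : alpha = Rpower alpha mu * Rpower alpha (1 - mu)).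
  { rewrite <- Rpower_plus; replace (mu + (1 - mu)) with 1 by ring.
    now rewrite Rpower_1. }
  rewrite Hsplit at 1; rewrite Rmult_assoc, Rplus_comm.
  apply Rmult_le_compat_l; [left; apply exp_pos |].
  now apply Rpower_geom_le_add.
Qed.

Lemma err_term_source_le (sigma c w : nat -> R) (alpha mu : R) (i : nat) :
  0 < alpha -> 0 <= mu <= 1 -> 0 < lam sigma i ->
  c i = Rpower (lam sigma i) mu * w i ->
  err_term sigma c alpha i <= Rpower alpha mu ^ 2 * norm_term w i.
Proof.
  intros Ha Hmu Hl Hc.
  unfold err_term, tik_coef, norm_term; rewrite Hc.
  set (l := lam sigma i) in *.
  set (q := alpha * Rpower l mu / (l + alpha)).
  assert (Hq0 : 0 <= q).
  { left; apply Rdiv_lt_0_compat; [apply Rmult_lt_0_compat; [lra | apply exp_pos] | lra]. }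
  assert (Hq : q <= Rpower alpha mu).
  { apply (Rmult_le_reg_r (l + alpha)); [lra |].
    unfold q, Rdiv; rewrite Rmult_assoc, Rinv_l, Rmult_1_r by lra.
    now apply tikhonov_qualification. }
  replace ((l / (l + alpha) * (Rpower l mu * w i) - Rpower l mu * w i) ^ 2)
    with (q ^ 2 * w i ^ 2) by (unfold q; field; lra).
  apply Rmult_le_compat_r; [apply pow2_ge_0 | apply pow_incr; lra].
Qed.

Lemma AsA_term_le_psiSL_term (sigma c : nat -> R) (alpha L : R) (i : nat) :
  0 < alpha -> 0 <= lam sigma i -> lam sigma i + alpha <= L ->
  AsA_term sigma c i <= L ^ 3 / alpha * psiSL_term sigma c alpha i.
Proof.
  intros Ha Hl HL.
  unfold AsA_term, psiSL_term.
  set (l := lam sigma i) in *.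
  assert (Hd : 0 < (l + alpha) ^ 3) by (apply pow_lt; lra).
  assert (Hratio : 1 <= L ^ 3 / (l + alpha) ^ 3).
  { apply (Rmult_le_reg_r ((l + alpha) ^ 3)); [lra |].
    unfold Rdiv; rewrite Rmult_assoc, Rinv_l, Rmult_1_l, Rmult_1_r by lra.
    apply pow_incr; lra. }
  replace (L ^ 3 / alpha * (alpha * l ^ 2 / (l + alpha) ^ 3 * c i ^ 2))
    with (L ^ 3 / (l + alpha) ^ 3 * (l * c i) ^ 2) by (field; lra).
  pose proof (pow2_ge_0 (l * c i)); nra.
Qed.

Lemma Rpower_sqrt_double (x mu : R) :
  0 < x -> Rpower (sqrt x) (2 * mu) = Rpower x mu.
Proof.
  intros Hx.
  rewrite <- Rpower_sqrt, Rpower_mult by exact Hx.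
  f_equal; field.
Qed.

Lemma Rpower_le_of_mul_le (a b k s mu : R) :
  0 < a -> 0 < b -> 0 < k -> 0 <= mu -> a * b <= k * s ->
  Rpower a mu <= Rpower k mu / Rpower b mu * Rpower s mu.
Proof.
  intros Ha Hb Hk Hmu Hab.
  assert (Hs : 0 < s) by nra.
  assert (Hsb : Rpower (s / b) mu * Rpower b mu = Rpower s mu).
  { rewrite Rpower_mult_distr by (try apply Rdiv_lt_0_compat; lra).
    f_equal; field; lra. }
  assert (Hb_mu : 0 < Rpower b mu) by apply exp_pos.
  rewrite <- Hsb.
  replace (Rpower k mu / Rpower b mu * (Rpower (s / b) mu * Rpower b mu))
    with (Rpower (k * (s / b)) mu)
    by (rewrite <- Rpower_mult_distr by (try apply Rdiv_lt_0_compat; lra); field; lra).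
  apply Rle_Rpower_l; [lra | split; [lra |]].
  apply (Rmult_le_reg_r b); [lra |].
  replace (k * (s / b) * b) with (k * s) by (field; lra); lra.
Qed.

Lemma tikhonov_error_le (sigma c w : nat -> R) (alpha mu Nw Cs E : R) :
  0 < alpha -> 0 <= mu <= 1 -> (forall i, 0 < lam sigma i) ->
  (forall i, c i = Rpower (lam sigma i) mu * w i) ->
  infinite_sum (norm_term w) Nw -> sqrt Nw <= Cs ->
  infinite_sum (err_term sigma c alpha) E ->
  sqrt E <= Cs * Rpower alpha mu.
Proof.
  intros Ha Hmu Hlam Hcw HNw HCs HE.
  assert (HEw : E <= Rpower alpha mu ^ 2 * Nw).
  { apply (infinite_sum_le _ _ _ _
             (fun i => err_term_source_le sigma c w alpha mu i Ha Hmu (Hlam i) (Hcw i)) HE).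
    now apply infinite_sum_scal. }
  assert (HNw0 : 0 <= Nw).
  { pose proof (term_le_infinite_sum _ _ (fun i => pow2_ge_0 (w i)) HNw 0%nat).
    pose proof (pow2_ge_0 (w 0%nat)); unfold norm_term in *; lra. }
  assert (Hamu : 0 < Rpower alpha mu) by apply exp_pos.
  apply (Rle_trans _ (sqrt (Rpower alpha mu ^ 2 * Nw))); [now apply sqrt_le_1_alt |].
  rewrite sqrt_mult, sqrt_pow2 by (try apply pow2_ge_0; lra).
  rewrite Rmult_comm; apply Rmult_le_compat_r; lra.
Qed.

Lemma AsA_norm_le_psiSL (sigma c : nat -> R) (alpha L P S : R) :
  0 < alpha -> (forall i, 0 <= lam sigma i /\ lam sigma i + alpha <= L) ->
  infinite_sum (AsA_term sigma c) P -> infinite_sum (psiSL_term sigma c alpha) S ->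
  alpha * P <= L ^ 3 * S.
Proof.
  intros Ha Hlam HP HS.
  assert (HPS : P <= L ^ 3 / alpha * S).
  { apply (infinite_sum_le _ _ _ _ (fun i => AsA_term_le_psiSL_term sigma c alpha L i
             Ha (proj1 (Hlam i)) (proj2 (Hlam i))) HP).
    now apply infinite_sum_scal. }
  apply (Rmult_le_reg_l (/ alpha)); [now apply Rinv_0_lt_compat |].
  replace (/ alpha * (alpha * P)) with P by (field; lra).
  replace (/ alpha * (L ^ 3 * S)) with (L ^ 3 / alpha * S) by (field; lra); lra.
Qed.

Lemma AsA_norm_pos (sigma c : nat -> R) (P : R) (i : nat) :
  0 < lam sigma i -> c i <> 0 -> infinite_sum (AsA_term sigma c) P -> 0 < P.
Proof.
  intros Hl Hc HP.
  pose proof (term_le_infinite_sum _ _ (fun i => pow2_ge_0 _) HP i).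
  assert (Hpos : 0 < (lam sigma i * c i) ^ 2).
  { rewrite <- Rsqr_pow2; apply Rsqr_pos_lt, Rmult_integral_contrapositive.
    split; [apply Rgt_not_eq, Hl | exact Hc]. }
  unfold AsA_term in *; lra.
Qed.

Theorem mainTheorem5 :
  forall (mu Cs alpha_max nA : R),
    0 < mu -> mu <= 1 -> 0 < alpha_max ->
    exists C : R,
      forall (sigma c : nat -> R),
        (* singular system of a compact operator with ||A|| = nA *)
        (forall i, 0 < sigma i) ->
        Un_cv sigma 0 ->
        opnorm_is sigma nA ->
        (* x^dagger in N(A)^perp with coefficients c, x^dagger <> 0 *)
        (exists Nx, infinite_sum (norm_term c) Nx) ->
        (exists i, c i <> 0) ->
        (* source condition x^dagger = (A^*A)^mu omega, ||omega|| <= Cs *)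
        (exists (w : nat -> R) (Nw : R),
            infinite_sum (norm_term w) Nw /\ sqrt Nw <= Cs /\
            forall i, c i = Rpower (lam sigma i) mu * w i) ->
        forall alpha E S P : R,
          0 < alpha -> alpha < alpha_max ->
          infinite_sum (err_term sigma c alpha) E ->     (* E = ||x_alpha - x^dagger||^2 *)
          infinite_sum (psiSL_term sigma c alpha) S ->   (* S = psi_SL(alpha,x^dagger)^2 *)
          infinite_sum (AsA_term sigma c) P ->           (* P = ||A^*A x^dagger||^2 *)
          sqrt E <= C / Rpower (sqrt P) (2 * mu) * Rpower (sqrt S) (2 * mu).
Proof.
  intros mu Cs alpha_max nA Hmu Hmu1 Hmax.
  set (L := nA ^ 2 + alpha_max).
  exists (Cs * Rpower (L ^ 3) mu).
  intros sigma c Hsigma _ HnA _ [i0 Hi0] [w [Nw [HNw [HCs Hcw]]]]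
    alpha E S P Ha Hamax HE HS HP.
  assert (Hlam : forall i, 0 < lam sigma i /\ lam sigma i + alpha <= L).
  { intros i; pose proof (proj1 HnA (sigma i) (ex_intro _ i eq_refl)).
    specialize (Hsigma i); unfold L, lam; split; nra. }
  assert (HEsqrt : sqrt E <= Cs * Rpower alpha mu)
    by (apply (tikhonov_error_le sigma c w _ _ Nw); try lra; auto; apply Hlam).
  assert (HaP : alpha * P <= L ^ 3 * S).
  { apply (AsA_norm_le_psiSL sigma c); auto.
    intros i; destruct (Hlam i); split; lra. }
  assert (HP0 : 0 < P) by (apply (AsA_norm_pos sigma c P i0); auto; apply Hlam).
  assert (HL3 : 0 < L ^ 3) by (apply pow_lt; pose proof (Hlam i0); lra).
  assert (HS0 : 0 < S) by nra.
  rewrite !Rpower_sqrt_double by lra.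
  replace (Cs * Rpower (L ^ 3) mu / Rpower P mu * Rpower S mu)
    with (Cs * (Rpower (L ^ 3) mu / Rpower P mu * Rpower S mu)) by (unfold Rdiv; ring).
  apply (Rle_trans _ _ _ HEsqrt), Rmult_le_compat_l;
    [pose proof (sqrt_pos Nw); lra | apply Rpower_le_of_mul_le; lra].
Qed.
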